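(* Let $A$ be a finite poset and $t>0$ an integer, let $k$ be the least natural number with $2^k>\max(|A|-t,\,t-1)$, and define $$\langle A\rangle_t:=\Big(\big((A/C_{2^k-t})+C_{2^k}\big)/C_t\Big)+A$$ (all constituents disjoint, with a fresh copy of $A$ as the last summand). Then $g(\langle A\rangle_t)=2^{k+1}$ if $g(A)<t$, and $g(\langle A\rangle_t)=0$ if $g(A)\ge t$.
   Context: For a finite poset $P$ and $x\in P$ let $P_x:=\{y\in P: x\not\le y\}$. The g-number is $g(P):=\operatorname{mex}\{g(P_x):x\in P\}$, where mex is the least natural number not in the set ($g(\emptyset)=0$). $P+Q$ (parallel union) is the disjoint union with points of $P$ incomparable to points of $Q$; $P/Q$ (series union) is the disjoint union with orders kept and every point of $P$ above every point of $Q$. $C_m$ is the chain with $m$ points ($C_0=\emptyset$). *)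

From mathcomp Require Import all_boot.
Set Implicit Arguments. Unset Strict Implicit. Unset Printing Implicit Defensive.

Record fposet := FPoset { pT : finType; ple : rel pT }.

Definition is_poset (P : fposet) : Prop :=
  [/\ reflexive (@ple P), antisymmetric (@ple P) & transitive (@ple P)].

Definition mex (s : seq nat) : nat :=
  find (fun n => n \notin s) (iota 0 (size s).+1).

(* g-number of the induced subposet on S, computed with fuel n.
   P_x = { y in S : ~ x <= y }. *)
Fixpoint gfuel (T : finType) (le : rel T) (n : nat) (S : {set T}) : nat :=
  match n with
  | 0 => 0
  | n'.+1 => mex [seq gfuel le n' [set y in S | ~~ le x y] | x <- enum S]
  end.

(* For a reflexive relation, fuel #|T| suffices (each step removes x). *)
Definition gnum (P : fposet) : nat := gfuel (@ple P) #|pT P| [set: pT P].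

Definition par_le (P Q : fposet) : rel (pT P + pT Q)%type :=
  fun u v => match u, v with
             | inl a, inl b => ple a b
             | inr a, inr b => ple a b
             | _, _ => false
             end.
Definition par (P Q : fposet) : fposet := FPoset (@par_le P Q).

(* series union P / Q : every point of P above every point of Q *)
Definition ser_le (P Q : fposet) : rel (pT P + pT Q)%type :=
  fun u v => match u, v with
             | inl a, inl b => ple a b
             | inr a, inr b => ple a b
             | inr _, inl _ => true
             | inl _, inr _ => false
             end.
Definition ser (P Q : fposet) : fposet := FPoset (@ser_le P Q).

Definition chain (m : nat) : fposet := @FPoset 'I_m (fun i j => i <= j).

Definition bracket (A : fposet) (t k : nat) : fposet :=
  par (ser (par (ser A (chain (2 ^ k - t))) (chain (2 ^ k))) (chain t)) A.

(* g is the Sprague-Grundy value of the poset game in which playing x deletes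
   the up-set of x.  Hence g(P + Q) = g(P) xor g(Q), and g(P / C_m) = m + g(P):
   moves in the bottom chain reach exactly the values below m, moves in P reach
   the values of P shifted by m.  Therefore
     g(<A>_t) = (t + ((2^k - t + g(A)) xor 2^k)) xor g(A),
   and since t <= 2^k and g(A) <= |A| < t + 2^k, the inner xor adds 2^k when
   g(A) < t and removes it when g(A) >= t; the outer xor then cancels to
   2^(k+1), resp. 0. *)

From Stdlib Require Import PeanoNat.
From mathcomp Require Import all_boot zify.
Set Implicit Arguments. Unset Strict Implicit. Unset Printing Implicit Defensive.

Lemma mex_notin s : mex s \notin s.
Proof.
have has_gap : has (fun n => n \notin s) (iota 0 (size s).+1).
  apply/hasPn => /(_ _ _)/negPn sub.
  by have := uniq_leq_size (iota_uniq 0 (size s).+1) sub; rewrite size_iota ltnn.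
have mex_lt : mex s < (size s).+1 by rewrite -[X in _ < X](size_iota 0) -has_find.
by have := nth_find 0 has_gap; rewrite nth_iota.
Qed.

Lemma mem_lt_mex s m : m < mex s -> m \in s.
Proof.
move=> lt_m; have := before_find 0 lt_m; rewrite nth_iota ?add0n => [/negbFE //|].
by apply: leq_trans lt_m _; rewrite -[X in _ <= X](size_iota 0) find_size.
Qed.

Lemma mex_eq s n : n \notin s -> (forall m, m < n -> m \in s) -> mex s = n.
Proof.
move=> n_notin lt_mem; case: (ltngtP (mex s) n) => // [/lt_mem | /mem_lt_mex].
  by rewrite (negPf (mex_notin s)).
by rewrite (negPf n_notin).
Qed.

Lemma lxor_double_bit x y c d :
  Nat.lxor (2 * x + Nat.b2n c) (2 * y + Nat.b2n d) =
  2 * Nat.lxor x y + Nat.b2n (xorb c d).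
Proof.
apply: Nat.bits_inj => -[|n]; rewrite Nat.lxor_spec.
  by rewrite !Nat.testbit_0_r.
by rewrite !Nat.testbit_succ_r Nat.lxor_spec.
Qed.

Lemma lxorK a b : Nat.lxor (Nat.lxor a b) b = a.
Proof. by rewrite Nat.lxor_assoc Nat.lxor_nilpotent Nat.lxor_0_r. Qed.

Lemma lxor_cancel_r a b c : Nat.lxor a c = Nat.lxor b c -> a = b.
Proof. by move=> e; rewrite -(lxorK a c) e lxorK. Qed.

Lemma double_bit_lt x y c d : x < y -> 2 * x + Nat.b2n c < 2 * y + Nat.b2n d.
Proof. by have := Nat.b2n_le_1 c; lia. Qed.

Lemma lxor_lt_cases m a b :
  m < Nat.lxor a b -> Nat.lxor m b < a \/ Nat.lxor m a < b.
Proof.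
elim/ltn_ind: m a b => m IH a b.
have [-> | m_gt0] := posnP m.
  rewrite !Nat.lxor_0_l; case: (ltngtP a b) => [||->]; try by [left|right].
  by rewrite Nat.lxor_nilpotent.
have [m1 [u em]] := Nat.exists_div2 m; subst m.
have [a1 [v ->]] := Nat.exists_div2 a.
have [b1 [w ->]] := Nat.exists_div2 b.
rewrite !lxor_double_bit.
have [lt1 _ | ge1 lt] := ltnP m1 (Nat.lxor a1 b1).
  have m1_lt : m1 < 2 * m1 + Nat.b2n u by have := Nat.b2n_le_1 u; lia.
  by case: (IH _ m1_lt a1 b1 lt1) => ?; [left|right]; apply: double_bit_lt.
have [-> u0 vw] : [/\ m1 = Nat.lxor a1 b1, Nat.b2n u = 0 & Nat.b2n (xorb v w) = 1].
  by have := Nat.b2n_le_1 u; have := Nat.b2n_le_1 (xorb v w); split; lia.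
rewrite (Nat.b2n_inj u false u0) lxorK (Nat.lxor_comm a1) lxorK.
by case: v w vw {lt} => [] [] //= _; [left|right]; lia.
Qed.

Lemma lxor_pow2 a k : a < 2 ^ k -> Nat.lxor a (2 ^ k) = a + 2 ^ k.
Proof.
elim: k a => [|k IH] a; first by rewrite expn0 ltnS leqn0 => /eqP->.
have [a1 [c ->]] := Nat.exists_div2 a.
have -> : 2 ^ k.+1 = 2 * 2 ^ k + Nat.b2n false by rewrite expnS addn0.
move=> lt_a; rewrite lxor_double_bit Bool.xorb_false_r IH; first by lia.
by have := Nat.b2n_le_1 c; lia.
Qed.

Section Grundy.
Variables (T : finType) (le : rel T).

Definition play (S : {set T}) (x : T) : {set T} := [set y in S | ~~ le x y].
Definition grundy (S : {set T}) : nat := gfuel le #|T| S.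

Hypothesis le_refl : reflexive le.

Lemma card_play (S : {set T}) x : x \in S -> #|play S x| < #|S|.
Proof.
move=> xS; apply/proper_card/properP; split.
  by apply/subsetP => y; rewrite inE => /andP[].
by exists x; rewrite // inE le_refl andbF.
Qed.

Lemma grundy_ind (Pr : {set T} -> Prop) :
  (forall S : {set T}, (forall x, x \in S -> Pr (play S x)) -> Pr S) ->
  forall S, Pr S.
Proof.
move=> IH S; move: {2}#|S|.+1 (ltnSn #|S|) => n; elim: n S => // n IHn S lt_S.
by apply: IH => x /card_play lt_x; apply: IHn; apply: leq_trans lt_x lt_S.
Qed.

Lemma gfuel_enough n n' (S : {set T}) :
  #|S| <= n -> #|S| <= n' -> gfuel le n S = gfuel le n' S.
Proof.
elim: n n' S => [|n IH] [|n'] S //=; rewrite ?leqn0 => le_n le_n';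
  rewrite ?(cards0_eq (eqP le_n)) ?(cards0_eq (eqP le_n')) ?enum_set0 //.
congr mex; apply/eq_in_map => x; rewrite mem_enum => /card_play lt_x.
by apply: IH; rewrite -ltnS; apply: leq_trans lt_x _.
Qed.

Lemma grundyE (S : {set T}) : grundy S = mex [seq grundy (play S x) | x <- enum S].
Proof.
have : #|S| <= #|T| by rewrite -cardsT subset_leq_card ?subsetT.
rewrite /grundy; case: #|T| => [|n] le_S; rewrite [LHS]/=.
  by rewrite (cards0_eq (_ : #|S| = 0)) ?enum_set0 //; apply/eqP; rewrite -leqn0.
congr mex; apply/eq_in_map => x; rewrite mem_enum => /card_play lt_x.
by apply: gfuel_enough; move: lt_x le_S; rewrite /play; lia.
Qed.

Lemma mem_grundy_play (S : {set T}) x :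
  x \in S -> grundy (play S x) \in [seq grundy (play S y) | y <- enum S].
Proof. by move=> xS; apply: (map_f (fun y => grundy (play S y))); rewrite mem_enum. Qed.

Lemma grundy_play_neq (S : {set T}) x : x \in S -> grundy (play S x) != grundy S.
Proof.
move=> xS; rewrite [grundy S]grundyE; apply/eqP => eq_g.
case/negP: (mex_notin [seq grundy (play S y) | y <- enum S]).
by rewrite -eq_g mem_grundy_play.
Qed.

Lemma grundy_play_lt (S : {set T}) m :
  m < grundy S -> exists2 x, x \in S & grundy (play S x) = m.
Proof.
by rewrite grundyE => /mem_lt_mex/mapP[x]; rewrite mem_enum => xS ->; exists x.
Qed.

Lemma grundy_eq (S : {set T}) n :
  (forall x, x \in S -> grundy (play S x) != n) ->
  (forall m, m < n -> exists2 x, x \in S & grundy (play S x) = m) ->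
  grundy S = n.
Proof.
move=> neq_n lt_n; rewrite grundyE; apply: mex_eq.
  by apply/mapP => -[x]; rewrite mem_enum => /neq_n; rewrite eq_sym => /eqP.
by move=> m /lt_n[x xS <-]; apply: mem_grundy_play.
Qed.

Lemma grundy_le_card (S : {set T}) : grundy S <= #|S|.
Proof.
elim/grundy_ind: S => S IH; rewrite leqNgt; apply/negP => /grundy_play_lt[x xS eq_g].
by have := IH x xS; rewrite eq_g leqNgt card_play.
Qed.

End Grundy.

Lemma gnumE (P : fposet) : gnum P = grundy (@ple P) [set: pT P].
Proof. by []. Qed.

Lemma gnum_le_card (P : fposet) : reflexive (@ple P) -> gnum P <= #|pT P|.
Proof. by move=> reflP; rewrite gnumE -cardsT grundy_le_card. Qed.

Lemma chain_refl m : reflexive (@ple (chain m)).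
Proof. exact: leqnn. Qed.

Lemma play_chain_prefix m i (x : 'I_m) :
  x < i -> play (@ple (chain m)) [set j : 'I_m | j < i] x = [set j : 'I_m | j < x].
Proof.
move=> lt_x; apply/setP => j; rewrite !inE -ltnNge.
by case: (ltnP j x) => [lt_j|]; rewrite ?andbT ?andbF // (ltn_trans lt_j lt_x).
Qed.

Lemma grundy_chain_prefix m i :
  i <= m -> grundy (@ple (chain m)) [set j : 'I_m | j < i] = i.
Proof.
elim/ltn_ind: i => i IH le_i; apply: (grundy_eq (@chain_refl m)) => [x | n lt_n].
  by rewrite inE => lt_x; rewrite play_chain_prefix // IH ?(ltn_eqF lt_x) //; lia.
have lt_n_m : n < m by lia.
exists (Ordinal lt_n_m); first by rewrite inE.
by rewrite play_chain_prefix // IH //=; lia.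
Qed.

Lemma gnum_chain m : gnum (chain m) = m.
Proof.
rewrite gnumE -[RHS](grundy_chain_prefix (leqnn m)); congr grundy.
by apply/setP => j; rewrite !inE ltn_ord.
Qed.

Section Par.
Variables P Q : fposet.
Hypotheses (reflP : reflexive (@ple P)) (reflQ : reflexive (@ple Q)).

Lemma par_refl : reflexive (@ple (par P Q)).
Proof. by case=> /=. Qed.

Implicit Type S : {set pT (par P Q)}.

Lemma preim_inl_play_par_inl S a :
  inl @^-1: play (@ple (par P Q)) S (inl a) = play (@ple P) (inl @^-1: S) a.
Proof. by apply/setP => c; rewrite !inE. Qed.

Lemma preim_inr_play_par_inl S a :
  inr @^-1: play (@ple (par P Q)) S (inl a) = inr @^-1: S.
Proof. by apply/setP => c; rewrite !inE andbT. Qed.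

Lemma preim_inl_play_par_inr S b :
  inl @^-1: play (@ple (par P Q)) S (inr b) = inl @^-1: S.
Proof. by apply/setP => c; rewrite !inE andbT. Qed.

Lemma preim_inr_play_par_inr S b :
  inr @^-1: play (@ple (par P Q)) S (inr b) = play (@ple Q) (inr @^-1: S) b.
Proof. by apply/setP => c; rewrite !inE. Qed.

Lemma grundy_par S :
  grundy (@ple (par P Q)) S =
  Nat.lxor (grundy (@ple P) (inl @^-1: S)) (grundy (@ple Q) (inr @^-1: S)).
Proof.
elim/(grundy_ind par_refl): S => S IH; apply: (grundy_eq par_refl) => [[a|b] xS | n].
- have aS : a \in inl @^-1: S by rewrite inE.
  rewrite IH // preim_inl_play_par_inl preim_inr_play_par_inl.
  by apply: contra_neq (grundy_play_neq reflP aS); apply: lxor_cancel_r.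
- have bS : b \in inr @^-1: S by rewrite inE.
  rewrite IH // preim_inl_play_par_inr preim_inr_play_par_inr.
  rewrite !(Nat.lxor_comm (grundy _ (inl @^-1: S))).
  by apply: contra_neq (grundy_play_neq reflQ bS); apply: lxor_cancel_r.
case/lxor_lt_cases =>
  [/(grundy_play_lt reflP)[a aS ga] | /(grundy_play_lt reflQ)[b bS gb]].
- rewrite inE in aS; exists (inl a) => //.
  by rewrite IH // preim_inl_play_par_inl preim_inr_play_par_inl ga lxorK.
- rewrite inE in bS; exists (inr b) => //.
  by rewrite IH // preim_inl_play_par_inr preim_inr_play_par_inr gb Nat.lxor_comm lxorK.
Qed.

End Par.

Section Ser.
Variables P Q : fposet.
Hypotheses (reflP : reflexive (@ple P)) (reflQ : reflexive (@ple Q)).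

Lemma ser_refl : reflexive (@ple (ser P Q)).
Proof. by case=> /=. Qed.

Implicit Type S : {set pT (ser P Q)}.

Lemma preim_inl_play_ser_inl S a :
  inl @^-1: play (@ple (ser P Q)) S (inl a) = play (@ple P) (inl @^-1: S) a.
Proof. by apply/setP => c; rewrite !inE. Qed.

Lemma preim_inr_play_ser_inl S a :
  inr @^-1: play (@ple (ser P Q)) S (inl a) = inr @^-1: S.
Proof. by apply/setP => c; rewrite !inE andbT. Qed.

Lemma preim_inl_play_ser_inr S b :
  inl @^-1: play (@ple (ser P Q)) S (inr b) = set0.
Proof. by apply/setP => c; rewrite !inE andbF. Qed.

Lemma preim_inr_play_ser_inr S b :
  inr @^-1: play (@ple (ser P Q)) S (inr b) = play (@ple Q) (inr @^-1: S) b.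
Proof. by apply/setP => c; rewrite !inE. Qed.

Lemma grundy_ser_bottom S :
  inl @^-1: S = set0 -> grundy (@ple (ser P Q)) S = grundy (@ple Q) (inr @^-1: S).
Proof.
elim/(grundy_ind ser_refl): S => S IH S_bot.
apply: (grundy_eq ser_refl) => [[a|b] xS | n].
- by have := in_set0 a; rewrite -S_bot inE xS.
- have bS : b \in inr @^-1: S by rewrite inE.
  by rewrite IH ?preim_inl_play_ser_inr // preim_inr_play_ser_inr grundy_play_neq.
case/(grundy_play_lt reflQ) => b; rewrite inE => bS gb; exists (inr b) => //.
by rewrite IH ?preim_inl_play_ser_inr // preim_inr_play_ser_inr.
Qed.

End Ser.

Section SerChain.
Variables (P : fposet) (m : nat).
Hypothesis reflP : reflexive (@ple P).

Implicit Type S : {set pT (ser P (chain m))}.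
Local Notation le := (@ple (ser P (chain m))).

Lemma grundy_play_ser_chain_inr S i :
  inr @^-1: S = setT -> grundy le (play le S (inr i)) = i.
Proof.
move=> S_chain.
rewrite (grundy_ser_bottom reflP (@chain_refl m)) ?preim_inl_play_ser_inr //.
rewrite preim_inr_play_ser_inr S_chain -(grundy_chain_prefix (ltnW (ltn_ord i))).
by congr grundy; apply/setP => j; rewrite !inE -ltnNge.
Qed.

Lemma grundy_ser_chain S : inr @^-1: S = setT ->
  grundy le S = m + grundy (@ple P) (inl @^-1: S).
Proof.
have refl := ser_refl reflP (@chain_refl m).
elim/(grundy_ind refl): S => S IH S_chain.
apply: (grundy_eq refl) => [[a|i] xS | n lt_n].
- have aS : a \in inl @^-1: S by rewrite inE.
  rewrite IH ?preim_inr_play_ser_inl // preim_inl_play_ser_inl eqn_add2l.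
  exact: grundy_play_neq.
- by rewrite grundy_play_ser_chain_inr // neq_ltn ltn_addr.
have [lt_n_m | ge_n_m] := ltnP n m.
  exists (inr (Ordinal lt_n_m)); last exact: grundy_play_ser_chain_inr.
  by have := in_setT (Ordinal lt_n_m); rewrite -S_chain inE.
have /(grundy_play_lt reflP)[a aS ga] : n - m < grundy (@ple P) (inl @^-1: S) by lia.
rewrite inE in aS; exists (inl a) => //.
by rewrite IH ?preim_inr_play_ser_inl // preim_inl_play_ser_inl ga subnKC.
Qed.

End SerChain.

Lemma gnum_par P Q : reflexive (@ple P) -> reflexive (@ple Q) ->
  gnum (par P Q) = Nat.lxor (gnum P) (gnum Q).
Proof. by move=> reflP reflQ; rewrite gnumE grundy_par // !preimsetT. Qed.

Lemma gnum_ser_chain P m : reflexive (@ple P) ->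
  gnum (ser P (chain m)) = m + gnum P.
Proof. by move=> reflP; rewrite gnumE grundy_ser_chain ?preimsetT. Qed.

Theorem mainTheorem8 (A : fposet) (t k : nat) :
  is_poset A -> 0 < t ->
  maxn (#|pT A| - t) t.-1 < 2 ^ k ->
  (forall j, j < k -> 2 ^ j <= maxn (#|pT A| - t) t.-1) ->
  (gnum A < t -> gnum (bracket A t k) = 2 ^ k.+1) /\
  (t <= gnum A -> gnum (bracket A t k) = 0).
Proof.
(* Only the upper bound on 2 ^ k matters, not the minimality of k. *)
move=> [reflA _ _] t_gt0 k_large _.
rewrite /bracket gnum_par ?gnum_ser_chain ?gnum_par ?gnum_ser_chain ?gnum_chain;
  try by auto using ser_refl, par_refl, chain_refl.
have le_g := gnum_le_card reflA.
set g := gnum A; split => [lt_g | ge_g].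
  have lt_g2 : g < 2 ^ k.+1 by rewrite expnS; lia.
  rewrite lxor_pow2; last by lia.
  have -> : t + (2 ^ k - t + g + 2 ^ k) = g + 2 ^ k.+1 by rewrite expnS; lia.
  by rewrite -lxor_pow2 // (Nat.lxor_comm g) lxorK.
have -> : 2 ^ k - t + g = g - t + 2 ^ k by lia.
by rewrite -lxor_pow2 ?lxorK ?subnKC ?Nat.lxor_nilpotent //; lia.
Qed.
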